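(* Assume $\|\varphi\|_{C^2([a,b])}<1$. Then there is a constant $C_0>0$ depending only on $\|w\|_{C^2([a,b])}$ such that for all $(s,x)\in[0,1]\times\mathbb R$, $$|\partial_xg(s,x)-1|\le C_0\|\varphi\|_{C^2([a,b])},\qquad|\partial_xh(s,x)-w'(x)|\le C_0\|\varphi\|_{C^2([a,b])}.$$
   Context: Let $w\in C^3(\mathbb R)$ be periodic with $w>0$ on $[-1,1]$. Let $-1<a<b<1$ and let $\varphi:[a,b]\to\mathbb R$ be a polynomial with $\varphi^{(k)}(a)=\varphi^{(k)}(b)=0$ for $k=0,1,2,3$, extended by zero outside $[a,b]$. For $x\in\mathbb R$, $(\xi(t,x),\eta(t,x))$ is the unique global solution of $$\frac{d\xi}{dt}=-w'(\xi)\varphi(\xi)-(\eta-w(\xi))\varphi'(\xi),\quad\frac{d\eta}{dt}=\varphi(\xi),\quad \xi(0)=x,\ \eta(0)=w(x).$$ For $s\in[0,1]$, $t_0(s,x)\ge0$ denotes the first time $t\ge0$ with $\eta(t,x)=w(\xi(t,x))+s\varphi(\xi(t,x))$ (it exists). $g(s,x)=\xi(t_0(s,x),x)$ and $h(s,x)=\eta(t_0(s,x),x)=w(g(s,x))+s\varphi(g(s,x))$; both are $C^2$ functions on $[0,1]\times\mathbb R$. *)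

From Stdlib Require Import Reals List.
Open Scope R_scope.

(* Polynomials as coefficient lists [c0; c1; ...; cn] (lowest degree first). *)
Fixpoint peval (l : list R) (x : R) : R :=
  match l with
  | nil => 0
  | c :: l' => c + x * peval l' x
  end.

Fixpoint pderiv_aux (k : nat) (l : list R) : list R :=
  match l with
  | nil => nil
  | c :: l' => (INR k * c) :: pderiv_aux (S k) l'
  end.

Definition pderiv (l : list R) : list R :=
  match l with
  | nil => nil
  | _ :: l' => pderiv_aux 1 l'
  end.

Fixpoint pderivn (k : nat) (l : list R) : list R :=
  match k with
  | O => l
  | S k' => pderiv (pderivn k' l)
  end.

Definition ext0 (a b : R) (p : list R) (x : R) : R :=
  if Rle_dec a x then (if Rle_dec x b then peval p x else 0) else 0.

Definition sup_abs_on (f : R -> R) (a b S : R) : Prop :=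
  is_lub (fun y => exists x, a <= x <= b /\ y = Rabs (f x)) S.

(* N = ||f||_{C^2([a,b])} = sup|f| + sup|f'| + sup|f''| on [a,b],
   where f1, f2 are the first and second derivatives of f. *)
Definition C2norm_on (f f1 f2 : R -> R) (a b N : R) : Prop :=
  exists S0 S1 S2,
    sup_abs_on f a b S0 /\ sup_abs_on f1 a b S1 /\ sup_abs_on f2 a b S2 /\
    N = S0 + S1 + S2.

(* Along a characteristic on which [phi (xi) <> 0], the ratio [sig = (eta - w (xi)) / phi (xi)]
   turns the system into the autonomous one
     [xi' = - phi (xi) (w' (xi) + sig phi' (xi))],  [sig' = 1 + (w' (xi) + sig phi' (xi))^2],
   with [sig (0) = 0]. So [t0] is the time at which [sig] reaches [s], whence [t0 <= s <= 1], and
   [xi] cannot reach a zero of [phi] (Gronwall on the distance to it). This field is Lipschitz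
   with constant [O((1 + ||w||)^2)] and its [xi]-component with constant [O(||phi||)], so Gronwall
   gives [|g y1 - g y2 - (y1 - y2)| <= C ||phi|| |y1 - y2|], which bounds [d_x g]; the bound for
   [h = w (g) + s phi (g)] follows by differentiating the composition. Zeros of [phi] are fixed
   points of [g]. *)

From Stdlib Require Import Reals List Lra Psatz Classical.
Open Scope R_scope.

Lemma derivable_pt_lim_sqr f t l : derivable_pt_lim f t l ->
  derivable_pt_lim (fun t => f t * f t) t (2 * f t * l).
Proof.
  intros H. replace (2 * f t * l) with (l * f t + f t * l) by ring.
  exact (derivable_pt_lim_mult f f t l l H H).
Qed.

Lemma derivable_pt_lim_exp_scal c t :
  derivable_pt_lim (fun t => exp (c * t)) t (c * exp (c * t)).
Proof.
  replace (c * exp (c * t)) with (exp (c * t) * (c * 1)) by ring.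
  apply (derivable_pt_lim_comp (fun t => c * t) exp).
  - apply (derivable_pt_lim_scal id). apply derivable_pt_lim_id.
  - apply derivable_pt_lim_exp.
Qed.

Lemma derivable_lipschitz_on f f' lo hi B :
  (forall c, lo <= c <= hi -> derivable_pt_lim f c (f' c)) ->
  (forall c, lo <= c <= hi -> Rabs (f' c) <= B) ->
  forall u v, lo <= u <= hi -> lo <= v <= hi -> Rabs (f u - f v) <= B * Rabs (u - v).
Proof.
  intros Hd HB u v Hu Hv.
  assert (Hmm : forall c, Rmin v u <= c <= Rmax v u -> lo <= c <= hi).
  { unfold Rmin, Rmax; intros c; destruct (Rle_dec v u); lra. }
  destruct (MVT_abs f f' v u) as [c [Hc Hcin]]; [intros; apply Hd, Hmm; auto|].
  rewrite Hc. apply Rmult_le_compat_r; [apply Rabs_pos | apply HB, Hmm; auto].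
Qed.

Lemma lipschitz_continuity f L : (forall u v, Rabs (f u - f v) <= L * Rabs (u - v)) ->
  continuity f.
Proof.
  intros Hf x eps Heps. exists (eps / (Rabs L + 1)). split.
  { apply Rdiv_lt_0_compat; [lra | pose proof (Rabs_pos L); lra]. }
  intros y [_ Hy]. simpl in *. unfold R_dist in *.
  pose proof (Rabs_pos L). pose proof (Rabs_pos (y - x)). pose proof (Rle_abs L).
  apply Rle_lt_trans with (Rabs L * Rabs (y - x)).
  { eapply Rle_trans; [apply Hf | apply Rmult_le_compat_r; lra]. }
  apply Rmult_lt_compat_l with (r := Rabs L + 1) in Hy; [|lra].
  unfold Rdiv in Hy. rewrite (Rmult_comm eps), <- Rmult_assoc, Rinv_r, Rmult_1_l in Hy by lra.
  nra.
Qed.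

Lemma gronwall_up E E' c T : 0 <= c ->
  (forall t, 0 <= t <= T -> derivable_pt_lim E t (E' t)) ->
  (forall t, 0 <= t <= T -> E' t <= c * E t) ->
  forall t, 0 <= t <= T -> E t <= E 0 * exp (c * t).
Proof.
  intros Hc Hd HE t Ht.
  set (f := fun t => E t * exp (- c * t)).
  set (f' := fun t => E' t * exp (- c * t) + E t * (- c * exp (- c * t))).
  assert (Hle : f t <= f 0).
  { destruct (Req_dec t 0) as [->|Ht0]; [lra|].
    destruct (MVT_cor2 f f' 0 t) as [th [H1 H2]]; [lra| |].
    { intros u Hu. apply (derivable_pt_lim_mult E (fun t => exp (_ * t))); [apply Hd; lra | apply derivable_pt_lim_exp_scal]. }
    assert (E' th <= c * E th) by (apply HE; lra).
    assert (f' th <= 0) by (pose proof (exp_pos (- c * th)); unfold f'; nra).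
    nra. }
  unfold f in Hle. rewrite Rmult_0_r, exp_0, Rmult_1_r in Hle.
  replace (E t) with (E t * exp (- c * t) * exp (c * t)).
  - apply Rmult_le_compat_r; [left; apply exp_pos | exact Hle].
  - rewrite Rmult_assoc, <- exp_plus. replace (- c * t + c * t) with 0 by ring.
    rewrite exp_0; ring.
Qed.

Lemma gronwall_down E E' c T : 0 <= c ->
  (forall t, 0 <= t <= T -> derivable_pt_lim E t (E' t)) ->
  (forall t, 0 <= t <= T -> - c * E t <= E' t) ->
  forall t, 0 <= t <= T -> E 0 * exp (- c * t) <= E t.
Proof.
  intros Hc Hd HE t Ht.
  set (f := fun t => E t * exp (c * t)).
  set (f' := fun t => E' t * exp (c * t) + E t * (c * exp (c * t))).
  assert (Hle : f 0 <= f t).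
  { destruct (Req_dec t 0) as [->|Ht0]; [lra|].
    destruct (MVT_cor2 f f' 0 t) as [th [H1 H2]]; [lra| |].
    { intros u Hu. apply (derivable_pt_lim_mult E (fun t => exp (_ * t))); [apply Hd; lra | apply derivable_pt_lim_exp_scal]. }
    assert (- c * E th <= E' th) by (apply HE; lra).
    assert (0 <= f' th) by (pose proof (exp_pos (c * th)); unfold f'; nra).
    nra. }
  unfold f in Hle. rewrite Rmult_0_r, exp_0, Rmult_1_r in Hle.
  replace (E t) with (E t * exp (c * t) * exp (- c * t)).
  - apply Rmult_le_compat_r; [left; apply exp_pos | exact Hle].
  - rewrite Rmult_assoc, <- exp_plus. replace (c * t + - c * t) with 0 by ring.
    rewrite exp_0; ring.
Qed.

Lemma exp_le_exp x y : x <= y -> exp x <= exp y.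
Proof. intros [H|H]; [left; apply exp_increasing; auto | subst; lra]. Qed.

Lemma continuity_pt_ub_left f T m : continuity_pt f T -> 0 < T ->
  (forall t, 0 <= t < T -> f t <= m) -> f T <= m.
Proof.
  intros Hc HT H. apply Rnot_lt_le. intros Hn.
  destruct (Hc (f T - m)) as [d [Hd Hd']]; [lra|].
  set (t := T - Rmin d T / 2).
  assert (0 < Rmin d T) by (apply Rmin_pos; lra).
  pose proof (Rmin_l d T). pose proof (Rmin_r d T).
  assert (f t <= m) by (apply H; unfold t; lra).
  assert (Rabs (f t - f T) < f T - m).
  { apply (Hd' t). split; [split; [exact I | unfold t; lra]|].
    simpl. unfold R_dist, t. rewrite Rabs_left; lra. }
  rewrite Rabs_left1 in H4; lra.
Qed.

Lemma first_zero f T : (forall t, continuity_pt f t) -> f 0 <> 0 -> 0 <= T -> f T = 0 ->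
  exists t1, 0 < t1 <= T /\ f t1 = 0 /\ forall u, 0 <= u < t1 -> f u <> 0.
Proof.
  intros Hc H0 HT HfT.
  set (L := fun t => forall z, 0 <= z <= T -> f z = 0 -> t <= z).
  destruct (completeness L) as [t1 [Hub Hlub]].
  { exists T. intros t Ht. apply Ht; auto; lra. }
  { exists 0. intros z Hz _. lra. }
  assert (Hlow : forall z, 0 <= z <= T -> f z = 0 -> t1 <= z).
  { intros z Hz Hz0. apply Hlub. intros t Ht. apply Ht; auto. }
  assert (Ht1 : 0 <= t1 <= T) by (split; [apply Hub; intros z Hz _; lra | apply Hlow; auto; lra]).
  assert (Hzero : f t1 = 0).
  { apply NNPP. intros Hn.
    destruct (Hc t1 (Rabs (f t1))) as [d [Hd Hd']]; [apply Rabs_pos_lt; auto|].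
    assert (t1 + d / 2 <= t1); [|lra].
    apply Hub. intros z Hz Hz0. pose proof (Hlow z Hz Hz0).
    apply Rnot_lt_le. intros Hzd. destruct (Req_dec z t1) as [->|Hne]; [auto|].
    assert (Rabs (f z - f t1) < Rabs (f t1)).
    { apply Hd'. split; [split; [exact I | auto]|].
      simpl; unfold R_dist; rewrite Rabs_right; lra. }
    rewrite Hz0, Rminus_0_l, Rabs_Ropp in H1. lra. }
  exists t1. split; [split; [|lra] | split; [auto|]].
  - destruct (Req_dec t1 0) as [E|]; [rewrite E in Hzero; contradiction | lra].
  - intros u Hu Hfu. pose proof (Hlow u ltac:(lra) Hfu). lra.
Qed.

Lemma derivable_pt_lim_dist_le f x d A B : derivable_pt_lim f x d ->
  (forall eps, 0 < eps -> exists del, 0 < del /\ forall h, h <> 0 -> Rabs h < del ->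
     Rabs ((f (x + h) - f x) / h - A) <= B + eps) ->
  Rabs (d - A) <= B.
Proof.
  intros Hd H. apply Rnot_lt_le. intros Hn. set (e := (Rabs (d - A) - B) / 2).
  assert (He : 0 < e) by (unfold e; lra).
  destruct (Hd e He) as [d1 Hd1]. destruct (H e He) as [d2 [Hd2 H2]].
  set (h := Rmin d1 d2 / 2).
  assert (0 < Rmin d1 d2) by (apply Rmin_pos; [apply cond_pos|lra]).
  pose proof (Rmin_l d1 d2). pose proof (Rmin_r d1 d2).
  assert (Hh : h <> 0) by (unfold h; lra).
  assert (Hha : Rabs h = h) by (apply Rabs_right; unfold h; lra).
  assert (A1 : Rabs ((f (x + h) - f x) / h - d) < e) by (apply Hd1; auto; rewrite Hha; unfold h; lra).
  assert (A2 : Rabs ((f (x + h) - f x) / h - A) <= B + e) by (apply H2; auto; rewrite Hha; unfold h; lra).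
  pose proof (Rabs_triang (- ((f (x + h) - f x) / h - d)) ((f (x + h) - f x) / h - A)) as Htri.
  rewrite Rabs_Ropp in Htri. replace (- ((f (x + h) - f x) / h - d) + ((f (x + h) - f x) / h - A))
    with (d - A) in Htri by ring.
  unfold e in *. lra.
Qed.

Lemma Rabs_div_le u h B : h <> 0 -> Rabs u <= B * Rabs h -> Rabs (u / h) <= B.
Proof.
  intros Hh H. unfold Rdiv. rewrite Rabs_mult, Rabs_inv.
  assert (0 < Rabs h) by (apply Rabs_pos_lt; auto).
  apply Rmult_le_reg_r with (Rabs h); auto.
  rewrite Rmult_assoc, Rinv_l by lra. lra.
Qed.

Lemma derivable_pt_lim_approx f x l eps : derivable_pt_lim f x l -> 0 < eps ->
  exists del, 0 < del /\
    forall k, Rabs k < del -> Rabs (f (x + k) - f x - l * k) <= eps * Rabs k.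
Proof.
  intros Hd He. destruct (Hd eps He) as [del Hdel]. exists del. split; [apply cond_pos|].
  intros k Hk. destruct (Req_dec k 0) as [->|Hk0].
  { rewrite Rplus_0_r, Rmult_0_r, Rabs_R0. replace (f x - f x - 0) with 0 by ring.
    rewrite Rabs_R0; lra. }
  specialize (Hdel k Hk0 Hk).
  replace (f (x + k) - f x - l * k) with (((f (x + k) - f x) / k - l) * k) by (field; auto).
  rewrite Rabs_mult. apply Rmult_le_compat_r; [apply Rabs_pos | lra].
Qed.

Lemma derivable_pt_lim_comp_near_id f f' e L G x d B : 0 <= L -> 0 <= B ->
  derivable_pt_lim f (G x) f' ->
  (forall u v, Rabs (e u - e v) <= L * Rabs (u - v)) ->
  (forall h, Rabs (G (x + h) - G x - h) <= B * Rabs h) ->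
  derivable_pt_lim (fun y => f (G y) + e (G y)) x d ->
  Rabs (d - f') <= Rabs f' * B + L * (1 + B).
Proof.
  intros HL HB Hf He HG Hd. apply (derivable_pt_lim_dist_le _ _ _ _ _ Hd).
  intros eps Heps.
  destruct (derivable_pt_lim_approx f (G x) f' (eps / (1 + B)) Hf) as [del [Hdel Happ]].
  { apply Rdiv_lt_0_compat; lra. }
  exists (del / (1 + B)). split; [apply Rdiv_lt_0_compat; lra|].
  intros h Hh Hhd. set (k := G (x + h) - G x).
  assert (Hk : Rabs k <= (1 + B) * Rabs h).
  { replace k with ((k - h) + h) by ring. eapply Rle_trans; [apply Rabs_triang|].
    unfold k. pose proof (HG h). lra. }
  assert (Hkdel : Rabs k < del).
  { apply Rmult_lt_compat_l with (r := 1 + B) in Hhd; [|lra].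
    unfold Rdiv in Hhd. rewrite (Rmult_comm del), <- Rmult_assoc, Rinv_r, Rmult_1_l in Hhd by lra.
    lra. }
  specialize (Happ k Hkdel). unfold k in Happ. rewrite Rplus_minus in Happ.
  replace ((f (G (x + h)) + e (G (x + h)) - (f (G x) + e (G x))) / h - f')
    with ((f (G (x + h)) - f (G x) - f' * k) / h + f' * ((k - h) / h)
          + (e (G (x + h)) - e (G x)) / h) by (unfold k; field; auto).
  assert (H1 : Rabs ((f (G (x + h)) - f (G x) - f' * k) / h) <= eps).
  { apply Rabs_div_le; auto. eapply Rle_trans; [exact Happ|].
    unfold Rdiv. rewrite Rmult_assoc. apply Rmult_le_compat_l; [lra|].
    apply Rmult_le_reg_l with (1 + B); [lra|].
    rewrite <- Rmult_assoc, Rinv_r, Rmult_1_l by lra. exact Hk. }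
  assert (H2 : Rabs (f' * ((k - h) / h)) <= Rabs f' * B).
  { rewrite Rabs_mult. apply Rmult_le_compat_l; [apply Rabs_pos|].
    apply Rabs_div_le; auto. apply HG. }
  assert (H3 : Rabs ((e (G (x + h)) - e (G x)) / h) <= L * (1 + B)).
  { apply Rabs_div_le; auto. eapply Rle_trans; [apply He|].
    rewrite Rmult_assoc. apply Rmult_le_compat_l; auto. }
  pose proof (Rabs_triang ((f (G (x + h)) - f (G x) - f' * k) / h + f' * ((k - h) / h))
    ((e (G (x + h)) - e (G x)) / h)).
  pose proof (Rabs_triang ((f (G (x + h)) - f (G x) - f' * k) / h) (f' * ((k - h) / h))).
  lra.
Qed.

Lemma Rabs_mult_le x y A B : Rabs x <= A -> Rabs y <= B -> Rabs (x * y) <= A * B.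
Proof. intros H1 H2. rewrite Rabs_mult. apply Rmult_le_compat; auto; apply Rabs_pos. Qed.

Lemma Rabs_le_of_sqr_le x y X : 1 <= X -> x * x <= y * y * X -> Rabs x <= X * Rabs y.
Proof.
  intros HX H. pose proof (Rabs_pos y).
  rewrite <- (Rabs_right (X * Rabs y)) by nra. apply Rsqr_le_abs_0. unfold Rsqr.
  assert (Rabs y * Rabs y = y * y) by (rewrite <- Rabs_mult; apply Rabs_right, Rle_ge, Rle_0_sqr).
  assert (0 <= y * y * X * (X - 1)) by (pose proof (Rle_0_sqr y); unfold Rsqr in *; apply Rmult_le_pos; nra).
  nra.
Qed.

(* Energy estimate for two solutions whose velocity differences [e1], [e2] are bounded by
   [L] times the [l1]-distance [|al| + |be|] between them. *)
Lemma energy_rate_le al be e1 e2 L : 0 <= L ->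
  Rabs e1 <= L * (Rabs al + Rabs be) -> Rabs e2 <= L * (Rabs al + Rabs be) ->
  2 * al * e1 + 2 * be * e2 <= 4 * L * (al * al + be * be).
Proof.
  intros HL H1 H2.
  pose proof (Rle_abs (al * e1)). pose proof (Rle_abs (be * e2)).
  rewrite Rabs_mult in H, H0.
  pose proof (Rabs_pos al). pose proof (Rabs_pos be).
  assert (Rabs al * Rabs e1 <= Rabs al * (L * (Rabs al + Rabs be))) by (apply Rmult_le_compat_l; auto).
  assert (Rabs be * Rabs e2 <= Rabs be * (L * (Rabs al + Rabs be))) by (apply Rmult_le_compat_l; auto).
  assert (0 <= L * ((Rabs al - Rabs be) * (Rabs al - Rabs be))) by (apply Rmult_le_pos; auto; apply Rle_0_sqr).
  assert (Rabs al * Rabs al = al * al) by (rewrite <- Rabs_mult; apply Rabs_right, Rle_ge, Rle_0_sqr).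
  assert (Rabs be * Rabs be = be * be) by (rewrite <- Rabs_mult; apply Rabs_right, Rle_ge, Rle_0_sqr).
  nra.
Qed.

(** * Polynomials and their extension by zero *)

Lemma peval_pderiv_aux l : forall k x,
  peval (pderiv_aux (S k) l) x = peval l x + peval (pderiv_aux k l) x.
Proof.
  induction l as [|c l IH]; intros k x; simpl; [ring|].
  rewrite IH. destruct k; simpl; ring.
Qed.

Lemma derivable_pt_lim_peval l x : derivable_pt_lim (peval l) x (peval (pderiv l) x).
Proof.
  induction l as [|c l IH].
  - apply derivable_pt_lim_const.
  - replace (peval (pderiv (c :: l)) x) with (0 + (1 * peval l x + id x * peval (pderiv l) x)).
    + apply (derivable_pt_lim_plus (fct_cte c) (id * peval l)%F).
      * apply derivable_pt_lim_const.
      * apply derivable_pt_lim_mult; [apply derivable_pt_lim_id | exact IH].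
    + simpl. rewrite peval_pderiv_aux. unfold id. destruct l; simpl; ring.
Qed.

Section ZeroExtension.
Variables (a b : R) (l : list R).

Lemma ext0_in u : a <= u <= b -> ext0 a b l u = peval l u.
Proof. intros [H1 H2]. unfold ext0. destruct (Rle_dec a u); [|lra]. destruct (Rle_dec u b); lra. Qed.

Lemma ext0_out u : ~ (a <= u <= b) -> ext0 a b l u = 0.
Proof. intros H. unfold ext0. destruct (Rle_dec a u); [|lra]. destruct (Rle_dec u b); [|lra]. exfalso; lra. Qed.

Hypothesis (Hab : a <= b) (Hla : peval l a = 0) (Hlb : peval l b = 0).

Lemma ext0_neq0_interior u : ext0 a b l u <> 0 -> a < u < b.
Proof.
  intros H. destruct (classic (a <= u <= b)) as [Hu|Hu]; [|rewrite ext0_out in H; lra].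
  rewrite ext0_in in H by auto.
  destruct (Req_dec u a) as [->|]; [lra|]. destruct (Req_dec u b) as [->|]; [lra|]. lra.
Qed.

Lemma ext0_clamp u : ext0 a b l u = peval l (Rmax a (Rmin u b)).
Proof.
  unfold Rmax, Rmin. destruct (classic (a <= u <= b)) as [Hu|Hu].
  - rewrite ext0_in by auto. destruct (Rle_dec u b); [|lra]. destruct (Rle_dec a u); [reflexivity|lra].
  - rewrite ext0_out by auto. destruct (Rle_dec u b); destruct (Rle_dec a _); try lra; congruence.
Qed.

Lemma ext0_lipschitz N : (forall u, a <= u <= b -> Rabs (peval (pderiv l) u) <= N) ->
  forall u v, Rabs (ext0 a b l u - ext0 a b l v) <= N * Rabs (u - v).
Proof.
  intros HN u v. rewrite !ext0_clamp.
  assert (Hc : forall z, a <= Rmax a (Rmin z b) <= b).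
  { intros z. unfold Rmax, Rmin. destruct (Rle_dec z b); destruct (Rle_dec a _); lra. }
  assert (HN0 : 0 <= N) by (eapply Rle_trans; [apply Rabs_pos | apply (HN a); lra]).
  eapply Rle_trans.
  - apply (derivable_lipschitz_on (peval l) (peval (pderiv l)) a b N); auto.
    intros; apply derivable_pt_lim_peval.
  - apply Rmult_le_compat_l; auto.
    unfold Rmax, Rmin, Rabs. destruct (Rle_dec u b), (Rle_dec v b);
    repeat match goal with |- context [Rle_dec ?x ?y] => destruct (Rle_dec x y) end;
    repeat destruct Rcase_abs; lra.
Qed.

Lemma derivable_pt_lim_ext0 u : a < u < b ->
  derivable_pt_lim (ext0 a b l) u (peval (pderiv l) u).
Proof.
  intros Hu. apply (derivable_pt_lim_locally_ext (peval l) _ u a b); auto.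
  - intros z Hz. rewrite ext0_in; lra.
  - apply derivable_pt_lim_peval.
Qed.

End ZeroExtension.

(** * The characteristic flow *)

(* [growth M] bounds the Gronwall factor [exp (c t)] of all flow estimates below: the rates
   are at most [16 (M + 1)^2] and the relevant times at most [s <= 1]. *)
Definition growth (M : R) := exp (16 * (M + 1) * (M + 1)).
Definition lip_G (M : R) := 8 * (M + 1) * growth M.
Definition lip_H (M : R) := (M + 1) * lip_G M + M * (M + 1) + 1.

Lemma exp_le_growth M c t : 0 <= c <= 16 * (M + 1) * (M + 1) -> 0 <= t <= 1 ->
  exp (c * t) <= growth M.
Proof. intros Hc Ht. apply exp_le_exp. nra. Qed.

Lemma growth_ge1 M : 0 <= M -> 1 <= growth M.
Proof. intros HM. rewrite <- exp_0. apply exp_le_exp. nra. Qed.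

Lemma lip_G_pos M : 0 <= M -> 0 < lip_G M.
Proof. intros HM. unfold lip_G. pose proof (growth_ge1 M HM). nra. Qed.

Lemma lip_G_le_lip_H M : 0 <= M -> lip_G M <= lip_H M.
Proof. intros HM. unfold lip_H. pose proof (lip_G_pos M HM). nra. Qed.

Section Flow.
Variables (w w1 w2 : R -> R) (a b : R) (p : list R) (xi eta t0 : R -> R -> R) (M N s : R).
Hypothesis Hw1 : forall x, derivable_pt_lim w x (w1 x).
Hypothesis Hw2 : forall x, derivable_pt_lim w1 x (w2 x).
Hypothesis Hab : a < b.
Hypothesis Hpa : peval p a = 0.
Hypothesis Hpb : peval p b = 0.
Hypothesis Hxi0 : forall x, xi 0 x = x.
Hypothesis Heta0 : forall x, eta 0 x = w x.
Hypothesis Hxi' : forall x t, derivable_pt_lim (fun t' => xi t' x) t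
        (- w1 (xi t x) * ext0 a b p (xi t x)
         - (eta t x - w (xi t x)) * ext0 a b (pderiv p) (xi t x)).
Hypothesis Heta' : forall x t, derivable_pt_lim (fun t' => eta t' x) t
        (ext0 a b p (xi t x)).
Hypothesis Hs : 0 <= s <= 1.
Hypothesis Ht0 : forall x,
       0 <= t0 s x /\
       eta (t0 s x) x = w (xi (t0 s x) x) + s * ext0 a b p (xi (t0 s x) x) /\
       (forall t, 0 <= t < t0 s x ->
          eta t x <> w (xi t x) + s * ext0 a b p (xi t x)).
Hypothesis HN1 : N < 1.
Hypothesis Bw1 : forall u, a <= u <= b -> Rabs (w1 u) <= M.
Hypothesis Bw2 : forall u, a <= u <= b -> Rabs (w2 u) <= M.
Hypothesis BP0 : forall u, a <= u <= b -> Rabs (peval p u) <= N.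
Hypothesis BP1 : forall u, a <= u <= b -> Rabs (peval (pderiv p) u) <= N.
Hypothesis BP2 : forall u, a <= u <= b -> Rabs (peval (pderiv (pderiv p)) u) <= N.

Local Notation Phi := (ext0 a b p).
Local Notation P := (peval p).
Local Notation P1 := (peval (pderiv p)).
Local Notation P2 := (peval (pderiv (pderiv p))).

Lemma M_nonneg : 0 <= M.
Proof. eapply Rle_trans; [apply Rabs_pos | apply (Bw1 a); lra]. Qed.

Lemma N_nonneg : 0 <= N.
Proof. eapply Rle_trans; [apply Rabs_pos | apply (BP0 a); lra]. Qed.

Definition gap y t := eta t y - w (xi t y).
Definition sig y t := gap y t / Phi (xi t y).
Definition xi_rhs y t := - w1 (xi t y) * Phi (xi t y) - gap y t * ext0 a b (pderiv p) (xi t y).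
Definition G y := xi (t0 s y) y.

(* The vector field of the system satisfied by [(xi, sig)] where [Phi (xi) <> 0]. *)
Definition kap u sg := w1 u + sg * P1 u.
Definition xi_field u sg := - P u * kap u sg.
Definition sig_field u sg := 1 + kap u sg * kap u sg.

Lemma Phi_lipschitz u v : Rabs (Phi u - Phi v) <= N * Rabs (u - v).
Proof. apply ext0_lipschitz; auto; lra. Qed.

Lemma Phi_le_dist_zero c u : Phi c = 0 -> Rabs (Phi u) <= N * Rabs (u - c).
Proof. intros Hc. rewrite <- (Rminus_0_r (Phi u)), <- Hc. apply Phi_lipschitz. Qed.

Lemma Phi_neq0_interior u : Phi u <> 0 -> a < u < b.
Proof. apply ext0_neq0_interior; auto; lra. Qed.

Lemma continuity_pt_xi y t : continuity_pt (fun t => xi t y) t.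
Proof. exact (derivable_continuous_pt _ _ (exist _ _ (Hxi' y t))). Qed.

Lemma continuity_Phi_xi y t : continuity_pt (fun t => Phi (xi t y)) t.
Proof.
  apply (continuity_pt_comp (fun t => xi t y) Phi); [apply continuity_pt_xi|].
  apply (lipschitz_continuity _ N), Phi_lipschitz.
Qed.

Lemma derivable_pt_lim_gap y t :
  derivable_pt_lim (gap y) t (Phi (xi t y) - w1 (xi t y) * xi_rhs y t).
Proof.
  apply (derivable_pt_lim_minus (fun t => eta t y) (comp w (fun t => xi t y))); [apply Heta'|].
  apply derivable_pt_lim_comp; [apply Hxi' | apply Hw1].
Qed.

Lemma continuity_pt_gap y t : continuity_pt (gap y) t.
Proof. exact (derivable_continuous_pt _ _ (exist _ _ (derivable_pt_lim_gap y t))). Qed.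

Lemma xi_rhs_field y t : Phi (xi t y) <> 0 -> xi_rhs y t = xi_field (xi t y) (sig y t).
Proof.
  intros H. pose proof (Phi_neq0_interior _ H).
  unfold xi_rhs, xi_field, kap, sig. rewrite !ext0_in in * by lra. field. auto.
Qed.

Lemma derivable_pt_lim_xi y t : Phi (xi t y) <> 0 ->
  derivable_pt_lim (fun t => xi t y) t (xi_field (xi t y) (sig y t)).
Proof. intros H. rewrite <- (xi_rhs_field y t H). exact (Hxi' y t). Qed.

Lemma derivable_pt_lim_sig y t : Phi (xi t y) <> 0 ->
  derivable_pt_lim (sig y) t (sig_field (xi t y) (sig y t)).
Proof.
  intros H. pose proof (Phi_neq0_interior _ H).
  replace (sig_field (xi t y) (sig y t)) with
    (((Phi (xi t y) - w1 (xi t y) * xi_rhs y t) * Phi (xi t y)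
      - (P1 (xi t y) * xi_rhs y t) * gap y t) / (Phi (xi t y))²).
  - apply (derivable_pt_lim_div (gap y) (fun t => Phi (xi t y))); auto.
    + apply derivable_pt_lim_gap.
    + apply (derivable_pt_lim_comp (fun t => xi t y) Phi); [apply Hxi'|].
      apply derivable_pt_lim_ext0; auto; lra.
  - unfold xi_rhs, sig_field, kap, sig, Rsqr. rewrite !ext0_in in * by lra. field. auto.
Qed.

Lemma sig_0 y : sig y 0 = 0.
Proof. unfold sig, gap. rewrite Hxi0, Heta0. unfold Rdiv. ring. Qed.

Lemma G_id y : s = 0 \/ Phi y = 0 -> G y = y.
Proof.
  intros H. destruct (Ht0 y) as [H1 [_ Hfirst]]. unfold G.
  replace (t0 s y) with 0; [apply Hxi0|].
  apply Rle_antisym; auto. apply Rnot_lt_le. intros Hpos.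
  apply (Hfirst 0); [lra|]. rewrite Hxi0, Heta0. destruct H as [-> | ->]; ring.
Qed.

Lemma kap_bound u sg : a <= u <= b -> 0 <= sg <= 1 -> Rabs (kap u sg) <= M + 1.
Proof.
  intros Hu Hsg. unfold kap. eapply Rle_trans; [apply Rabs_triang|].
  assert (Rabs (sg * P1 u) <= 1 * 1) by (apply Rabs_mult_le; [rewrite Rabs_right; lra | apply (Rle_trans _ N); auto; lra]).
  pose proof (Bw1 u Hu). lra.
Qed.

Lemma xi_field_bound u sg : a <= u <= b -> 0 <= sg <= 1 ->
  Rabs (xi_field u sg) <= (M + 1) * Rabs (P u).
Proof.
  intros Hu Hsg. unfold xi_field. rewrite Rabs_mult, Rabs_Ropp, Rmult_comm.
  apply Rmult_le_compat_r; [apply Rabs_pos | apply kap_bound; auto].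
Qed.

Lemma sig_field_ge1 u sg : 1 <= sig_field u sg.
Proof. unfold sig_field. pose proof (Rle_0_sqr (kap u sg)). unfold Rsqr in H. lra. Qed.

Lemma kap_deriv_bound u sg : a <= u <= b -> 0 <= sg <= 1 -> Rabs (w2 u + sg * P2 u) <= M + 1.
Proof.
  intros Hu Hsg. eapply Rle_trans; [apply Rabs_triang|].
  assert (Rabs (sg * P2 u) <= 1 * 1) by (apply Rabs_mult_le; [rewrite Rabs_right; lra | apply (Rle_trans _ N); auto; lra]).
  pose proof (Bw2 u Hu). lra.
Qed.

Lemma derivable_pt_lim_kap sg u : derivable_pt_lim (fun u => kap u sg) u (w2 u + sg * P2 u).
Proof.
  apply (derivable_pt_lim_plus w1 (fun u => sg * P1 u)); [apply Hw2|].
  apply (derivable_pt_lim_scal P1), derivable_pt_lim_peval.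
Qed.

Lemma xi_field_lipschitz u1 u2 sg1 sg2 : a <= u1 <= b -> a <= u2 <= b ->
  0 <= sg1 <= 1 -> 0 <= sg2 <= 1 ->
  Rabs (xi_field u1 sg1 - xi_field u2 sg2) <= 3 * (M + 1) * N * (Rabs (u1 - u2) + Rabs (sg1 - sg2)).
Proof.
  intros Hu1 Hu2 Hs1 Hs2. pose proof M_nonneg. pose proof N_nonneg.
  assert (H1 : Rabs (xi_field u1 sg1 - xi_field u2 sg1) <= (2 * (M + 1) * N) * Rabs (u1 - u2)).
  { apply (derivable_lipschitz_on (fun u => xi_field u sg1)
      (fun u => - P1 u * kap u sg1 + - P u * (w2 u + sg1 * P2 u)) a b); auto.
    - intros c _. apply (derivable_pt_lim_mult (fun u => - P u) (fun u => kap u sg1)).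
      + apply (derivable_pt_lim_opp P), derivable_pt_lim_peval.
      + apply derivable_pt_lim_kap.
    - intros c Hc. eapply Rle_trans; [apply Rabs_triang|].
      assert (Rabs (- P1 c * kap c sg1) <= N * (M + 1))
        by (apply Rabs_mult_le; [rewrite Rabs_Ropp|apply kap_bound]; auto).
      assert (Rabs (- P c * (w2 c + sg1 * P2 c)) <= N * (M + 1))
        by (apply Rabs_mult_le; [rewrite Rabs_Ropp|apply kap_deriv_bound]; auto).
      lra. }
  assert (H2 : Rabs (xi_field u2 sg1 - xi_field u2 sg2) <= N * Rabs (sg1 - sg2)).
  { replace (xi_field u2 sg1 - xi_field u2 sg2) with ((- P u2 * P1 u2) * (sg1 - sg2))
      by (unfold xi_field, kap; ring).
    rewrite Rabs_mult. apply Rmult_le_compat_r; [apply Rabs_pos|].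
    replace N with (1 * N) by ring.
    apply Rabs_mult_le; [rewrite Rabs_Ropp; apply (Rle_trans _ N); auto; lra | auto]. }
  pose proof (Rabs_triang (xi_field u1 sg1 - xi_field u2 sg1) (xi_field u2 sg1 - xi_field u2 sg2)).
  replace (xi_field u1 sg1 - xi_field u2 sg1 + (xi_field u2 sg1 - xi_field u2 sg2))
    with (xi_field u1 sg1 - xi_field u2 sg2) in H3 by ring.
  pose proof (Rabs_pos (u1 - u2)). pose proof (Rabs_pos (sg1 - sg2)).
  assert (0 <= M * N * Rabs (u1 - u2)) by (apply Rmult_le_pos; [apply Rmult_le_pos|]; lra).
  assert (0 <= M * N * Rabs (sg1 - sg2)) by (apply Rmult_le_pos; [apply Rmult_le_pos|]; lra).
  assert (0 <= N * Rabs (u1 - u2)) by (apply Rmult_le_pos; lra).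
  assert (0 <= N * Rabs (sg1 - sg2)) by (apply Rmult_le_pos; lra).
  lra.
Qed.

Lemma sig_field_lipschitz u1 u2 sg1 sg2 : a <= u1 <= b -> a <= u2 <= b ->
  0 <= sg1 <= 1 -> 0 <= sg2 <= 1 ->
  Rabs (sig_field u1 sg1 - sig_field u2 sg2) <= 4 * (M + 1) * (M + 1) * (Rabs (u1 - u2) + Rabs (sg1 - sg2)).
Proof.
  intros Hu1 Hu2 Hs1 Hs2. pose proof M_nonneg. pose proof N_nonneg.
  assert (H1 : Rabs (sig_field u1 sg1 - sig_field u2 sg1) <= (2 * (M + 1) * (M + 1)) * Rabs (u1 - u2)).
  { apply (derivable_lipschitz_on (fun u => sig_field u sg1)
      (fun u => 0 + ((w2 u + sg1 * P2 u) * kap u sg1 + kap u sg1 * (w2 u + sg1 * P2 u))) a b); auto.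
    - intros c _. apply (derivable_pt_lim_plus (fct_cte 1)); [apply derivable_pt_lim_const|].
      apply (derivable_pt_lim_mult (fun u => kap u sg1) (fun u => kap u sg1)); apply derivable_pt_lim_kap.
    - intros c Hc. replace (0 + ((w2 c + sg1 * P2 c) * kap c sg1 + kap c sg1 * (w2 c + sg1 * P2 c)))
        with (2 * (kap c sg1 * (w2 c + sg1 * P2 c))) by ring.
      rewrite Rmult_assoc. apply Rabs_mult_le; [rewrite Rabs_right; lra|].
      apply Rabs_mult_le; [apply kap_bound | apply kap_deriv_bound]; auto. }
  assert (H2 : Rabs (sig_field u2 sg1 - sig_field u2 sg2) <= 2 * (M + 1) * Rabs (sg1 - sg2)).
  { replace (sig_field u2 sg1 - sig_field u2 sg2) with ((P1 u2 * (kap u2 sg1 + kap u2 sg2)) * (sg1 - sg2))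
      by (unfold sig_field, kap; ring).
    rewrite Rabs_mult. apply Rmult_le_compat_r; [apply Rabs_pos|].
    replace (2 * (M + 1)) with (1 * (2 * (M + 1))) by ring.
    apply Rabs_mult_le; [apply (Rle_trans _ N); auto; lra|].
    eapply Rle_trans; [apply Rabs_triang|].
    pose proof (kap_bound u2 sg1 Hu2 Hs1). pose proof (kap_bound u2 sg2 Hu2 Hs2). lra. }
  pose proof (Rabs_triang (sig_field u1 sg1 - sig_field u2 sg1) (sig_field u2 sg1 - sig_field u2 sg2)).
  replace (sig_field u1 sg1 - sig_field u2 sg1 + (sig_field u2 sg1 - sig_field u2 sg2))
    with (sig_field u1 sg1 - sig_field u2 sg2) in H3 by ring.
  pose proof (Rabs_pos (u1 - u2)). pose proof (Rabs_pos (sg1 - sg2)).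
  assert (0 <= M * M * Rabs (sg1 - sg2)) by (apply Rmult_le_pos; [apply Rmult_le_pos|]; lra).
  assert (0 <= M * M * Rabs (u1 - u2)) by (apply Rmult_le_pos; [apply Rmult_le_pos|]; lra).
  assert (0 <= M * Rabs (sg1 - sg2)) by (apply Rmult_le_pos; lra).
  assert (0 <= M * Rabs (u1 - u2)) by (apply Rmult_le_pos; lra).
  lra.
Qed.

Lemma sig_before y t1 : 0 < s -> t1 <= t0 s y ->
  (forall u, 0 <= u < t1 -> Phi (xi u y) <> 0) ->
  forall u, 0 <= u < t1 -> u <= sig y u < s.
Proof.
  intros Hs0 Ht1 Hnz u Hu.
  assert (Hd : forall c, 0 <= c <= u -> derivable_pt_lim (sig y) c (sig_field (xi c y) (sig y c)))
    by (intros; apply derivable_pt_lim_sig, Hnz; lra).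
  assert (Hge : u <= sig y u).
  { destruct (Req_dec u 0) as [->|Hu0]; [rewrite sig_0; lra|].
    destruct (MVT_cor2 (sig y) (fun c => sig_field (xi c y) (sig y c)) 0 u) as [c [H1 H2]];
      [lra | intros; apply Hd; lra|].
    rewrite sig_0 in H1. pose proof (sig_field_ge1 (xi c y) (sig y c)). nra. }
  split; auto. apply Rnot_le_lt. intros Hn.
  assert (Hex : exists tau, 0 <= tau <= u /\ sig y tau = s).
  { destruct (Req_dec (sig y u) s) as [E|Hne]; [exists u; split; auto; lra|].
    destruct (Ranalysis5.IVT_interv (fun t => sig y t - s) 0 u) as [tau [Htau Hsig]].
    - intros c Hc. apply (continuity_pt_minus (sig y) (fct_cte s)).
      + exact (derivable_continuous_pt _ _ (exist _ _ (Hd c Hc))).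
      + apply continuity_pt_const. intros ? ?; reflexivity.
    - destruct (Req_dec u 0) as [E|]; [rewrite E, sig_0 in Hn; lra | lra].
    - rewrite sig_0; lra.
    - lra.
    - exists tau. split; auto; lra. }
  destruct Hex as [tau [Htau Hsig]].
  destruct (Ht0 y) as [_ [_ Hfirst]]. apply (Hfirst tau); [lra|].
  assert (Hp : Phi (xi tau y) <> 0) by (apply Hnz; lra).
  assert (gap y tau = s * Phi (xi tau y)).
  { rewrite <- Hsig. unfold sig. field. auto. }
  unfold gap in *. lra.
Qed.

Lemma Phi_xi_neq0_before y : 0 < s -> Phi y <> 0 ->
  forall u, 0 <= u < t0 s y -> Phi (xi u y) <> 0.
Proof.
  intros Hs0 Hy u0 Hu0 Hz.
  destruct (first_zero (fun t => Phi (xi t y)) u0) as [t1 [Ht1 [Hat Hbefore]]];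
    [apply continuity_Phi_xi | rewrite Hxi0; auto | lra | auto |].
  pose proof (sig_before y t1 Hs0 ltac:(lra) Hbefore) as Hsig.
  (* [|gap| = sig |Phi (xi)| <= |Phi (xi)|] before [t1], so [gap] vanishes at [t1] *)
  assert (HF : Rabs (gap y t1) - Rabs (Phi (xi t1 y)) <= 0).
  { apply (continuity_pt_ub_left (fun t => Rabs (gap y t) - Rabs (Phi (xi t y)))); [ | lra | ].
    - apply continuity_pt_minus;
        apply (continuity_pt_comp _ Rabs); auto using continuity_pt_gap, continuity_Phi_xi, Rcontinuity_abs.
    - intros t Ht. destruct (Hsig t Ht).
      replace (gap y t) with (sig y t * Phi (xi t y)) by (unfold sig; field; apply Hbefore; auto).
      rewrite Rabs_mult, (Rabs_right (sig y t)) by lra.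
      pose proof (Rabs_pos (Phi (xi t y))). nra. }
  rewrite Hat, Rabs_R0 in HF.
  assert (Hg : gap y t1 = 0)
    by (apply NNPP; intros Hn; pose proof (Rabs_pos_lt _ Hn); lra).
  destruct (Ht0 y) as [_ [_ Hfirst]]. apply (Hfirst t1); [lra|].
  unfold gap in Hg. rewrite Hat. lra.
Qed.

Lemma t0_pos y : 0 < s -> Phi y <> 0 -> 0 < t0 s y.
Proof.
  intros Hs0 Hy. destruct (Ht0 y) as [H1 [H2 _]].
  destruct (Req_dec (t0 s y) 0) as [Heq|]; [|lra]. exfalso.
  rewrite Heq, Hxi0, Heta0 in H2. assert (s * Phi y = 0) by lra.
  apply Rmult_integral in H. destruct H; lra.
Qed.

Lemma t0_le_s y : 0 < s -> Phi y <> 0 -> t0 s y <= s.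
Proof.
  intros Hs0 Hy. apply Rnot_lt_le. intros Hn.
  pose proof (sig_before y (t0 s y) Hs0 (Rle_refl _) (Phi_xi_neq0_before y Hs0 Hy) s). lra.
Qed.

Lemma derivable_pt_lim_xi_sqdist y c t :
  derivable_pt_lim (fun t => (xi t y - c) * (xi t y - c)) t (2 * (xi t y - c) * xi_rhs y t).
Proof.
  apply (derivable_pt_lim_sqr (fun t => xi t y - c)).
  replace (xi_rhs y t) with (xi_rhs y t - 0) by ring.
  apply (derivable_pt_lim_minus (fun t => xi t y) (fct_cte c)); [apply Hxi' | apply derivable_pt_lim_const].
Qed.

Lemma xi_rhs_near_zero y t c : Phi (xi t y) <> 0 -> 0 <= sig y t <= 1 -> Phi c = 0 ->
  Rabs (xi_rhs y t) <= (M + 1) * N * Rabs (xi t y - c).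
Proof.
  intros Hn Hsg Hc. pose proof (Phi_neq0_interior _ Hn).
  rewrite xi_rhs_field, Rmult_assoc by auto.
  eapply Rle_trans; [apply xi_field_bound; lra|]. apply Rmult_le_compat_l; [pose proof M_nonneg; lra|].
  pose proof (Phi_le_dist_zero c (xi t y) Hc). rewrite ext0_in in H0 by lra. auto.
Qed.

Lemma xi_sqdist_rate y t c : Phi (xi t y) <> 0 -> 0 <= sig y t <= 1 -> Phi c = 0 ->
  Rabs (2 * (xi t y - c) * xi_rhs y t) <= 2 * (M + 1) * N * ((xi t y - c) * (xi t y - c)).
Proof.
  intros Hn Hsg Hc. pose proof (xi_rhs_near_zero y t c Hn Hsg Hc).
  rewrite !Rabs_mult, (Rabs_right 2) by lra.
  rewrite <- (Rabs_right ((xi t y - c) * (xi t y - c))) by (apply Rle_ge, Rle_0_sqr).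
  rewrite Rabs_mult. pose proof (Rabs_pos (xi t y - c)). nra.
Qed.

Lemma Phi_xi_neq0_at_t0 y : 0 < s -> Phi y <> 0 -> Phi (G y) <> 0.
Proof.
  intros Hs0 Hy Hg. unfold G in Hg. set (T := t0 s y) in *. set (g := xi T y) in *.
  pose proof (t0_pos y Hs0 Hy). pose proof (t0_le_s y Hs0 Hy). fold T in H, H0.
  pose proof (Phi_xi_neq0_before y Hs0 Hy) as Hnz. fold T in Hnz.
  pose proof (sig_before y T Hs0 (Rle_refl _) Hnz) as Hsig.
  set (c := 2 * (M + 1) * N).
  assert (Hc0 : 0 <= c) by (unfold c; pose proof M_nonneg; pose proof N_nonneg; nra).
  set (u := fun t => (xi t y - g) * (xi t y - g)).
  assert (Hu0 : 0 < u 0).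
  { unfold u. rewrite Hxi0. assert (y - g <> 0) by (intro E; apply Hy; replace y with g by lra; auto).
    pose proof (Rsqr_pos_lt _ H1). unfold Rsqr in H2. lra. }
  (* Gronwall keeps [u] away from 0 on [0, T), contradicting [u T = 0] *)
  assert (Hlow : forall t, 0 <= t < T -> - u t <= - (u 0 * exp (- c))).
  { intros t Ht.
    assert (u 0 * exp (- c * t) <= u t).
    { apply (gronwall_down u (fun t => 2 * (xi t y - g) * xi_rhs y t) c t); [exact Hc0 | | | lra].
      - intros; apply derivable_pt_lim_xi_sqdist.
      - intros t' Ht'. pose proof (Hsig t' ltac:(lra)).
        pose proof (xi_sqdist_rate y t' g (Hnz t' ltac:(lra)) ltac:(lra) Hg) as Hr.
        pose proof (Rle_abs (- (2 * (xi t' y - g) * xi_rhs y t'))) as Habs.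
        rewrite Rabs_Ropp in Habs. unfold u, c. lra. }
    assert (exp (- c) <= exp (- c * t)) by (apply exp_le_exp; nra).
    assert (u 0 * exp (- c) <= u 0 * exp (- c * t)) by (apply Rmult_le_compat_l; lra).
    lra. }
  assert (Hcont : continuity_pt (fun t => - u t) T).
  { apply (continuity_pt_opp u), (derivable_continuous_pt _ _ (exist _ _ (derivable_pt_lim_xi_sqdist y g T))). }
  pose proof (continuity_pt_ub_left _ T _ Hcont H Hlow) as HH. simpl in HH.
  unfold u at 1, g in HH. rewrite Rminus_diag, Rmult_0_l in HH.
  pose proof (exp_pos (- c)). nra.
Qed.

Lemma flow_regular y : 0 < s -> Phi y <> 0 ->
  0 < t0 s y <= s /\
  (forall t, 0 <= t <= t0 s y -> Phi (xi t y) <> 0 /\ 0 <= sig y t <= s) /\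
  sig y (t0 s y) = s.
Proof.
  intros Hs0 Hy.
  assert (HsT : sig y (t0 s y) = s).
  { destruct (Ht0 y) as [_ [H2 _]]. pose proof (Phi_xi_neq0_at_t0 y Hs0 Hy). unfold G in H.
    unfold sig, gap. rewrite H2. field. auto. }
  split; [split; [apply t0_pos | apply t0_le_s]; auto|]. split; auto.
  intros t [Ht1 Ht2]. destruct (Req_dec t (t0 s y)) as [->|Hne].
  - split; [apply Phi_xi_neq0_at_t0; auto | lra].
  - split; [apply Phi_xi_neq0_before; auto; lra|].
    pose proof (sig_before y (t0 s y) Hs0 (Rle_refl _) (Phi_xi_neq0_before y Hs0 Hy) t ltac:(lra)). lra.
Qed.

Lemma flow_in_box y t : 0 < s -> Phi y <> 0 -> 0 <= t <= t0 s y ->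
  a < xi t y < b /\ 0 <= sig y t <= 1 /\ Phi (xi t y) <> 0.
Proof.
  intros Hs0 Hy Ht. destruct (flow_regular y Hs0 Hy) as [_ [H _]]. destruct (H t Ht).
  pose proof (Phi_neq0_interior _ H0). repeat split; auto; lra.
Qed.

Lemma xi_time_lipschitz y lo hi B : 0 < s -> Phi y <> 0 -> 0 <= lo <= hi -> hi <= t0 s y ->
  (forall t, lo <= t <= hi -> Rabs (xi_field (xi t y) (sig y t)) <= B) ->
  Rabs (xi hi y - xi lo y) <= B * (hi - lo).
Proof.
  intros Hs0 Hy Hlo Hhi HB. rewrite <- (Rabs_right (hi - lo)) by lra.
  apply (derivable_lipschitz_on (fun t => xi t y) (fun t => xi_field (xi t y) (sig y t)) lo hi); auto; try lra.
  intros c Hc. apply derivable_pt_lim_xi. apply (flow_in_box y c); auto; lra.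
Qed.

Lemma G_hybrid y1 y2 : 0 < s -> Phi y1 = 0 -> Phi y2 <> 0 ->
  Rabs (G y2 - y2) <= lip_G M * N * Rabs (y1 - y2).
Proof.
  intros Hs0 Hy1 Hy2. pose proof M_nonneg. pose proof N_nonneg. pose proof (growth_ge1 M M_nonneg).
  destruct (flow_regular y2 Hs0 Hy2) as [HT _]. set (T2 := t0 s y2) in *.
  set (u := fun t => (xi t y2 - y1) * (xi t y2 - y1)).
  (* Gronwall: [xi] stays within [growth M * |y1 - y2|] of the zero [y1] *)
  assert (Hd : forall t, 0 <= t <= T2 -> Rabs (xi t y2 - y1) <= growth M * Rabs (y1 - y2)).
  { intros t Ht. apply Rabs_le_of_sqr_le; auto. fold (u t).
    replace (y1 - y2) with (- (xi 0 y2 - y1)) by (rewrite Hxi0; ring).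
    rewrite <- Ropp_mult_distr_l, <- Ropp_mult_distr_r, Ropp_involutive. fold (u 0).
    eapply Rle_trans.
    - apply (gronwall_up u (fun t => 2 * (xi t y2 - y1) * xi_rhs y2 t) (2 * (M + 1) * N) T2); auto.
      + nra.
      + intros; apply derivable_pt_lim_xi_sqdist.
      + intros t' Ht'. destruct (flow_in_box y2 t' Hs0 Hy2 Ht') as [_ [Hsg Hn]].
        eapply Rle_trans; [apply Rle_abs | apply xi_sqdist_rate; auto].
    - assert (0 <= u 0) by apply Rle_0_sqr.
      apply Rmult_le_compat_l; auto. apply exp_le_growth; nra. }
  replace (G y2 - y2) with (xi T2 y2 - xi 0 y2) by (unfold G; fold T2; rewrite Hxi0; ring).
  eapply Rle_trans.
  - apply (xi_time_lipschitz y2 0 T2 ((M + 1) * N * (growth M * Rabs (y1 - y2)))); auto; [lra | apply Rle_refl|].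
    intros t Ht. destruct (flow_in_box y2 t Hs0 Hy2 Ht) as [_ [Hsg Hn]].
    rewrite <- xi_rhs_field by auto. eapply Rle_trans; [apply (xi_rhs_near_zero _ _ y1); auto|].
    apply Rmult_le_compat_l; [nra | apply Hd; auto].
  - pose proof (Rabs_pos (y1 - y2)). unfold lip_G.
    assert (0 <= (M + 1) * N * (growth M * Rabs (y1 - y2))) by (repeat apply Rmult_le_pos; lra).
    nra.
Qed.

Section Pair.
Variables y1 y2 : R.
Hypothesis Hs0 : 0 < s.
Hypothesis Hy1 : Phi y1 <> 0.
Hypothesis Hy2 : Phi y2 <> 0.
Hypothesis HT : t0 s y1 <= t0 s y2.

Local Notation T1 := (t0 s y1).
Local Notation T2 := (t0 s y2).
Local Notation dxi t := (xi t y1 - xi t y2).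
Local Notation dsig t := (sig y1 t - sig y2 t).

Lemma pair_field_lipschitz t : 0 <= t <= T1 ->
  Rabs (xi_field (xi t y1) (sig y1 t) - xi_field (xi t y2) (sig y2 t))
    <= 3 * (M + 1) * N * (Rabs (dxi t) + Rabs (dsig t)) /\
  Rabs (sig_field (xi t y1) (sig y1 t) - sig_field (xi t y2) (sig y2 t))
    <= 4 * (M + 1) * (M + 1) * (Rabs (dxi t) + Rabs (dsig t)).
Proof.
  intros Ht. destruct (flow_in_box y1 t Hs0 Hy1 Ht) as [H1 [H2 _]].
  destruct (flow_in_box y2 t Hs0 Hy2 ltac:(lra)) as [H3 [H4 _]].
  split; [apply xi_field_lipschitz | apply sig_field_lipschitz]; auto; lra.
Qed.

Lemma pair_distance_bound t : 0 <= t <= T1 ->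
  Rabs (dxi t) + Rabs (dsig t) <= 2 * growth M * Rabs (y1 - y2).
Proof.
  intros Ht. pose proof M_nonneg. pose proof N_nonneg. pose proof (growth_ge1 M M_nonneg).
  set (E := fun t => dxi t * dxi t + dsig t * dsig t).
  assert (HE : E t <= (y1 - y2) * (y1 - y2) * growth M).
  { replace ((y1 - y2) * (y1 - y2)) with (E 0) by (unfold E; rewrite !Hxi0, !sig_0; ring).
    eapply Rle_trans.
    - apply (gronwall_up E (fun t => 2 * dxi t * (xi_field (xi t y1) (sig y1 t) - xi_field (xi t y2) (sig y2 t))
          + 2 * dsig t * (sig_field (xi t y1) (sig y1 t) - sig_field (xi t y2) (sig y2 t)))
          (16 * (M + 1) * (M + 1)) T1); auto; [nra| |].
      + intros t' Ht'. destruct (flow_in_box y1 t' Hs0 Hy1 Ht') as [_ [_ Hn1]].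
        destruct (flow_in_box y2 t' Hs0 Hy2 ltac:(lra)) as [_ [_ Hn2]].
        apply (derivable_pt_lim_plus (fun t => dxi t * dxi t) (fun t => dsig t * dsig t)).
        * apply (derivable_pt_lim_sqr (fun t => dxi t)).
          apply (derivable_pt_lim_minus (fun t => xi t y1)); apply derivable_pt_lim_xi; auto.
        * apply (derivable_pt_lim_sqr (fun t => dsig t)).
          apply (derivable_pt_lim_minus (sig y1)); apply derivable_pt_lim_sig; auto.
      + intros t' Ht'. destruct (pair_field_lipschitz t' Ht') as [Hxi Hsig].
        replace (16 * (M + 1) * (M + 1)) with (4 * (4 * (M + 1) * (M + 1))) by ring.
        apply energy_rate_le; [nra| |auto].
        eapply Rle_trans; [exact Hxi|]. apply Rmult_le_compat_r; [pose proof (Rabs_pos (dxi t')); pose proof (Rabs_pos (dsig t')); lra|].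
        nra.
    - apply Rmult_le_compat_l; [unfold E; rewrite !Hxi0, !sig_0; pose proof (Rle_0_sqr (y1 - y2)); unfold Rsqr in *; lra|].
      apply exp_le_growth; [nra|]. pose proof (flow_regular y1 Hs0 Hy1). lra. }
  assert (Hsq : 0 <= dxi t * dxi t /\ 0 <= dsig t * dsig t) by (split; apply Rle_0_sqr).
  pose proof (Rabs_le_of_sqr_le (dxi t) (y1 - y2) (growth M) ltac:(auto) ltac:(unfold E in HE; lra)).
  pose proof (Rabs_le_of_sqr_le (dsig t) (y1 - y2) (growth M) ltac:(auto) ltac:(unfold E in HE; lra)).
  lra.
Qed.

Lemma pair_xi_gap : Rabs (dxi T1 - (y1 - y2)) <= 6 * (M + 1) * N * growth M * Rabs (y1 - y2).
Proof.
  pose proof M_nonneg. pose proof N_nonneg. pose proof (growth_ge1 M M_nonneg). pose proof (Rabs_pos (y1 - y2)).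
  destruct (flow_regular y1 Hs0 Hy1) as [HT1 _].
  set (B := 3 * (M + 1) * N * (2 * growth M * Rabs (y1 - y2))).
  assert (HB : 0 <= B) by (unfold B; repeat apply Rmult_le_pos; lra).
  assert (Hl : Rabs (dxi T1 - dxi 0) <= B * Rabs (T1 - 0)).
  { apply (derivable_lipschitz_on (fun t => dxi t)
      (fun t => xi_field (xi t y1) (sig y1 t) - xi_field (xi t y2) (sig y2 t)) 0 T1); try lra.
    - intros c Hc. destruct (flow_in_box y1 c Hs0 Hy1 Hc) as [_ [_ Hn1]].
      destruct (flow_in_box y2 c Hs0 Hy2 ltac:(lra)) as [_ [_ Hn2]].
      apply (derivable_pt_lim_minus (fun t => xi t y1)); apply derivable_pt_lim_xi; auto.
    - intros c Hc. destruct (pair_field_lipschitz c Hc) as [Hxi _].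
      eapply Rle_trans; [exact Hxi|]. unfold B. apply Rmult_le_compat_l; [nra|].
      apply pair_distance_bound; auto. }
  rewrite !Hxi0, Rminus_0_r, (Rabs_right T1) in Hl by lra. unfold B in *. nra.
Qed.

Lemma pair_time_gap : T2 - T1 <= 2 * growth M * Rabs (y1 - y2).
Proof.
  destruct (flow_regular y1 Hs0 Hy1) as [HT1 [_ Hs1]].
  destruct (flow_regular y2 Hs0 Hy2) as [HT2 [H2 Hs2]].
  assert (Hgap : T2 - T1 <= sig y2 T2 - sig y2 T1).
  { destruct (Req_dec T1 T2) as [E|Hne]; [rewrite E; lra|].
    destruct (MVT_cor2 (sig y2) (fun t => sig_field (xi t y2) (sig y2 t)) T1 T2) as [c [Hc1 Hc2]];
      [lra | intros c Hc; apply derivable_pt_lim_sig, H2; lra |].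
    pose proof (sig_field_ge1 (xi c y2) (sig y2 c)). nra. }
  pose proof (pair_distance_bound T1 ltac:(lra)).
  pose proof (Rle_abs (dsig T1)). pose proof (Rabs_pos (dxi T1)). lra.
Qed.

(* [G y1 - G y2] splits into the gap at the common time [T1] and the drift of [xi y2]
   during [T1 <= t <= T2]. *)
Lemma G_pair : Rabs (G y1 - G y2 - (y1 - y2)) <= lip_G M * N * Rabs (y1 - y2).
Proof.
  pose proof M_nonneg. pose proof N_nonneg. pose proof (growth_ge1 M M_nonneg). pose proof (Rabs_pos (y1 - y2)).
  destruct (flow_regular y1 Hs0 Hy1) as [HT1 _].
  assert (Hdrift : Rabs (xi T2 y2 - xi T1 y2) <= (M + 1) * N * (T2 - T1)).
  { apply xi_time_lipschitz; auto; try lra.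
    intros t Ht. destruct (flow_in_box y2 t Hs0 Hy2 ltac:(lra)) as [Hi [Hsg _]].
    eapply Rle_trans; [apply xi_field_bound; lra|]. apply Rmult_le_compat_l; [lra | apply BP0; lra]. }
  pose proof pair_xi_gap. pose proof pair_time_gap.
  unfold G. replace (xi T1 y1 - xi T2 y2 - (y1 - y2))
    with ((dxi T1 - (y1 - y2)) - (xi T2 y2 - xi T1 y2)) by ring.
  eapply Rle_trans; [apply Rabs_triang|]. rewrite Rabs_Ropp.
  assert ((M + 1) * N * (T2 - T1) <= (M + 1) * N * (2 * growth M * Rabs (y1 - y2)))
    by (apply Rmult_le_compat_l; nra).
  unfold lip_G. nra.
Qed.

End Pair.

Lemma G_near_id y1 y2 : Rabs (G y1 - G y2 - (y1 - y2)) <= lip_G M * N * Rabs (y1 - y2).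
Proof.
  assert (Hnn : 0 <= lip_G M * N * Rabs (y1 - y2)).
  { pose proof (lip_G_pos M M_nonneg). pose proof N_nonneg. pose proof (Rabs_pos (y1 - y2)).
    apply Rmult_le_pos; [apply Rmult_le_pos|]; lra. }
  assert (Htriv : G y1 = y1 -> G y2 = y2 -> Rabs (G y1 - G y2 - (y1 - y2)) <= lip_G M * N * Rabs (y1 - y2)).
  { intros -> ->. replace (y1 - y2 - (y1 - y2)) with 0 by ring. rewrite Rabs_R0; auto. }
  destruct (Req_dec s 0) as [Hs0|Hs0]; [apply Htriv; apply G_id; auto|].
  assert (Hsp : 0 < s) by lra.
  destruct (Req_dec (Phi y1) 0) as [H1|H1]; destruct (Req_dec (Phi y2) 0) as [H2|H2].
  - apply Htriv; apply G_id; auto.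
  - rewrite (G_id y1) by auto. replace (y1 - G y2 - (y1 - y2)) with (- (G y2 - y2)) by ring.
    rewrite Rabs_Ropp. apply G_hybrid; auto.
  - rewrite (G_id y2) by auto. replace (G y1 - y2 - (y1 - y2)) with (G y1 - y1) by ring.
    rewrite (Rabs_minus_sym y1 y2). apply G_hybrid; auto.
  - destruct (Rle_dec (t0 s y1) (t0 s y2)); [apply G_pair; auto|].
    replace (G y1 - G y2 - (y1 - y2)) with (- (G y2 - G y1 - (y2 - y1))) by ring.
    rewrite Rabs_Ropp, (Rabs_minus_sym y1 y2). apply G_pair; auto. lra.
Qed.

Lemma G_near x : a <= x <= b -> a <= G x <= b /\ Rabs (G x - x) <= (M + 1) * N.
Proof.
  intros Hx. pose proof M_nonneg. pose proof N_nonneg.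
  destruct (classic (s = 0 \/ Phi x = 0)) as [Htriv|Htriv].
  { rewrite G_id, Rminus_diag, Rabs_R0 by auto. split; auto. nra. }
  assert (Hs0 : 0 < s) by (destruct (Req_dec s 0); [tauto | lra]).
  assert (Hx0 : Phi x <> 0) by tauto.
  destruct (flow_regular x Hs0 Hx0) as [HT _].
  split; [destruct (flow_in_box x (t0 s x) Hs0 Hx0 ltac:(lra)); unfold G; lra|].
  replace (G x - x) with (xi (t0 s x) x - xi 0 x) by (unfold G; rewrite Hxi0; ring).
  eapply Rle_trans.
  - apply (xi_time_lipschitz x 0 (t0 s x) ((M + 1) * N)); auto; try lra.
    intros t Ht. destruct (flow_in_box x t Hs0 Hx0 Ht) as [Hi [Hsg _]].
    eapply Rle_trans; [apply xi_field_bound; lra|]. apply Rmult_le_compat_l; [lra | apply BP0; lra].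
  - assert (0 <= (M + 1) * N) by nra. nra.
Qed.

Lemma G_shift_near_id x h : Rabs (G (x + h) - G x - h) <= lip_G M * N * Rabs h.
Proof. pose proof (G_near_id (x + h) x). replace (x + h - x) with h in H by ring. exact H. Qed.

Lemma deriv_xi_t0_bound x d : derivable_pt_lim (fun y => xi (t0 s y) y) x d ->
  Rabs (d - 1) <= lip_G M * N.
Proof.
  intros Hd. pose proof (lip_G_pos M M_nonneg). pose proof N_nonneg.
  pose proof (derivable_pt_lim_comp_near_id id 1 (fun _ => 0) 0 G x d (lip_G M * N)) as Hb.
  rewrite Rabs_R1, Rmult_0_l, Rplus_0_r, Rmult_1_l in Hb. apply Hb; try nra.
  - apply derivable_pt_lim_id.
  - intros u v. rewrite Rminus_diag, Rabs_R0. lra.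
  - apply G_shift_near_id.
  - apply (derivable_pt_lim_ext (fun y => xi (t0 s y) y)); auto.
    intros y. unfold id, G. ring.
Qed.

Lemma deriv_eta_t0_bound x d : derivable_pt_lim (fun y => eta (t0 s y) y) x d ->
  Rabs (d - w1 x) <= lip_H M * N.
Proof.
  intros Hd. pose proof (lip_G_pos M M_nonneg). pose proof N_nonneg. pose proof M_nonneg.
  assert (HH : forall y, eta (t0 s y) y = w (G y) + s * Phi (G y)) by (intros y; apply Ht0).
  destruct (classic (a <= x <= b)) as [Hx|Hx].
  - destruct (G_near x Hx) as [HGx HGxx].
    assert (Hb : Rabs (d - w1 (G x)) <= Rabs (w1 (G x)) * (lip_G M * N) + s * N * (1 + lip_G M * N)).
    { apply (derivable_pt_lim_comp_near_id w (w1 (G x)) (fun u => s * Phi u) (s * N) G x d (lip_G M * N)); auto; try nra.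
      - intros u v. rewrite <- Rmult_minus_distr_l, Rabs_mult, (Rabs_right s), Rmult_assoc by lra.
        apply Rmult_le_compat_l; [lra | apply Phi_lipschitz].
      - apply G_shift_near_id.
      - apply (derivable_pt_lim_ext (fun y => eta (t0 s y) y)); auto. }
    assert (Hw : Rabs (w1 (G x) - w1 x) <= M * ((M + 1) * N)).
    { eapply Rle_trans; [apply (derivable_lipschitz_on w1 w2 a b M); auto|].
      apply Rmult_le_compat_l; auto. }
    pose proof (Bw1 (G x) HGx).
    assert (Rabs (w1 (G x)) * (lip_G M * N) <= M * (lip_G M * N)) by (apply Rmult_le_compat_r; nra).
    assert (s * N * (1 + lip_G M * N) <= N * (1 + lip_G M)).
    { assert (0 <= N * (1 + lip_G M * N)) by nra.
      assert (lip_G M * N <= lip_G M) by nra. nra. }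
    pose proof (Rabs_triang (d - w1 (G x)) (w1 (G x) - w1 x)).
    replace (d - w1 (G x) + (w1 (G x) - w1 x)) with (d - w1 x) in H5 by ring.
    unfold lip_H. nra.
  - (* off [a,b], [Phi] vanishes near [x], so [G] is the identity and [eta (t0 s y) y = w y] *)
    assert (Hloc : exists lo hi, lo < x < hi /\ forall y, lo < y < hi -> Phi y = 0).
    { destruct (Rlt_dec x a).
      - exists (x - 1), a. split; [lra|]. intros y Hy. apply ext0_out. lra.
      - exists b, (x + 1). split; [lra|]. intros y Hy. apply ext0_out. lra. }
    destruct Hloc as [lo [hi [Hx' Hz]]].
    assert (Hdw : derivable_pt_lim (fun y => eta (t0 s y) y) x (w1 x)).
    { apply (derivable_pt_lim_locally_ext w _ x lo hi); auto.
      intros y Hy. rewrite HH, G_id, Hz by auto. ring. }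
    rewrite (uniqueness_limite _ _ _ _ Hd Hdw), Rminus_diag, Rabs_R0.
    unfold lip_H. apply Rmult_le_pos; nra.
Qed.
End Flow.

Lemma C2norm_on_bound f f1 f2 a b N : a <= b -> C2norm_on f f1 f2 a b N ->
  (forall u, a <= u <= b -> Rabs (f u) <= N) /\ (forall u, a <= u <= b -> Rabs (f1 u) <= N) /\
  (forall u, a <= u <= b -> Rabs (f2 u) <= N) /\ 0 <= N.
Proof.
  intros Hab [S0 [S1 [S2 [[H0 _] [[H1 _] [[H2 _] ->]]]]]].
  assert (Hsup : forall g S, is_upper_bound (fun y => exists x, a <= x <= b /\ y = Rabs (g x)) S ->
    0 <= S /\ forall u, a <= u <= b -> Rabs (g u) <= S).
  { intros g S HS. split; [eapply Rle_trans; [apply (Rabs_pos (g a)) | apply HS; exists a; split; auto; lra]|].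
    intros u Hu. apply HS. exists u. auto. }
  destruct (Hsup f S0 H0) as [? B0], (Hsup f1 S1 H1) as [? B1], (Hsup f2 S2 H2) as [? B2].
  repeat split; [intros u Hu; specialize (B0 u Hu) | intros u Hu; specialize (B1 u Hu) |
    intros u Hu; specialize (B2 u Hu) | ]; lra.
Qed.

Theorem theorem3p8 :
  forall M : R, exists C0 : R, 0 < C0 /\
  forall (w w1 w2 w3 : R -> R) (a b : R) (p : list R)
         (xi eta t0 : R -> R -> R) (Nw Nphi : R),
    (forall x, derivable_pt_lim w x (w1 x)) ->
    (forall x, derivable_pt_lim w1 x (w2 x)) ->
    (forall x, derivable_pt_lim w2 x (w3 x)) ->
    continuity w3 ->
    (exists T, 0 < T /\ forall x, w (x + T) = w x) ->
    (forall x, -1 <= x <= 1 -> 0 < w x) ->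
    -1 < a -> a < b -> b < 1 ->
    (forall k : nat, (k <= 3)%nat ->
       peval (pderivn k p) a = 0 /\ peval (pderivn k p) b = 0) ->
    (forall x, xi 0 x = x) ->
    (forall x, eta 0 x = w x) ->
    (forall x t, derivable_pt_lim (fun t' => xi t' x) t
        (- w1 (xi t x) * ext0 a b p (xi t x)
         - (eta t x - w (xi t x)) * ext0 a b (pderiv p) (xi t x))) ->
    (forall x t, derivable_pt_lim (fun t' => eta t' x) t
        (ext0 a b p (xi t x))) ->
    (forall s x, 0 <= s <= 1 ->
       0 <= t0 s x /\
       eta (t0 s x) x = w (xi (t0 s x) x) + s * ext0 a b p (xi (t0 s x) x) /\
       (forall t, 0 <= t < t0 s x ->
          eta t x <> w (xi t x) + s * ext0 a b p (xi t x))) ->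
    C2norm_on w w1 w2 a b Nw -> Nw = M ->
    C2norm_on (peval p) (peval (pderiv p)) (peval (pderivn 2 p)) a b Nphi ->
    Nphi < 1 ->
    forall s x, 0 <= s <= 1 ->
      (forall d, derivable_pt_lim (fun y => xi (t0 s y) y) x d ->
         Rabs (d - 1) <= C0 * Nphi) /\
      (forall d, derivable_pt_lim (fun y => eta (t0 s y) y) x d ->
         Rabs (d - w1 x) <= C0 * Nphi).
Proof.
  intros M. exists (lip_H (Rabs M)). split.
  { pose proof (Rabs_pos M) as HM. pose proof (lip_G_pos _ HM). pose proof (lip_G_le_lip_H _ HM). lra. }
  (* Only [phi (a) = phi (b) = 0] and two derivatives of [w] enter the estimate. *)
  intros w w1 w2 w3 a b p xi eta t0 Nw Nphi Hw1 Hw2 _ _ _ _ _ Hab _ Hk Hxi0 Heta0 Hxi' Heta' Ht0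
    HNw <- HNphi HNphi1 s x Hs.
  destruct (C2norm_on_bound _ _ _ _ _ _ (Rlt_le _ _ Hab) HNw) as [_ [Bw1 [Bw2 HM]]].
  destruct (C2norm_on_bound _ _ _ _ _ _ (Rlt_le _ _ Hab) HNphi) as [BP0 [BP1 [BP2 HN]]].
  destruct (Hk 0%nat) as [Hpa Hpb]; [lia|].
  rewrite (Rabs_right Nw) by lra. split; intros d Hd.
  - eapply Rle_trans; [exact (deriv_xi_t0_bound w w1 w2 a b p xi eta t0 Nw Nphi s Hw1 Hw2 Hab Hpa Hpb
      Hxi0 Heta0 Hxi' Heta' Hs (fun y => Ht0 s y Hs) HNphi1 Bw1 Bw2 BP0 BP1 BP2 x d Hd)|].
    apply Rmult_le_compat_r; [lra | apply lip_G_le_lip_H; lra].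
  - exact (deriv_eta_t0_bound w w1 w2 a b p xi eta t0 Nw Nphi s Hw1 Hw2 Hab Hpa Hpb
      Hxi0 Heta0 Hxi' Heta' Hs (fun y => Ht0 s y Hs) HNphi1 Bw1 Bw2 BP0 BP1 BP2 x d Hd).
Qed.
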